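(* Let $n\ge 2$ be an integer and $A\subseteq L_n$. The subspace $(L_n,\tau(A)|_{L_n})$ of $(X_n,\tau(A))$ is $\sigma$-compact if and only if $A$ is an $F_\sigma$-set in $(L_n,\tau_E|_{L_n})$ and $|L_n\setminus A|\le\aleph_0$.
   Context: For $\overline{x},\overline{a}\in\mathbb R^n$ let $|\overline{x}-\overline{a}|$ be the Euclidean distance and $B(\overline{a},\epsilon)=\{\overline{x}\in\mathbb R^n:|\overline{x}-\overline{a}|<\epsilon\}$. Let $P_n=\{\overline{x}\in\mathbb R^n: x_n>0\}$, $L_n=\{\overline{x}\in\mathbb R^n: x_n=0\}$, $X_n=P_n\cup L_n$, and let $\tau_E$ denote the Euclidean topology on $X_n$. For $\overline{a}\in L_n$ and $\epsilon>0$ put $\overline{a(\epsilon)}=(a_1,\dots,a_{n-1},\epsilon)$ and $\tilde B(\overline{a},\epsilon)=\{\overline{a}\}\cup B(\overline{a(\epsilon)},\epsilon)$. For $A\subseteq L_n$, the topology $\tau(A)$ on $X_n$ is generated by the local bases: at $\overline{a}\in P_n$, the sets $B(\overline{a},\epsilon)$ with $0<\epsilon<a_n$; at $\overline{a}\in A$, the sets $B(\overline{a},\epsilon)\cap X_n$ with $\epsilon>0$; at $\overline{a}\in L_n\setminus A$, the sets $\tilde B(\overline{a},\epsilon)$ with $\epsilon>0$. *)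

From Stdlib Require Import Reals.
From mathcomp Require Import all_boot.
Open Scope R_scope.

(* A point of R^n is represented as (first n-1 coordinates, last coordinate x_n). *)
Definition pt (n : nat) : Type := ('I_(n.-1) -> R) * R.

Definition edist {n : nat} (x y : pt n) : R :=
  sqrt (\big[Rplus/0]_(i < n.-1) Rsqr (x.1 i - y.1 i) + Rsqr (x.2 - y.2)).

Definition Ball {n : nat} (a : pt n) (e : R) : pt n -> Prop :=
  fun x => edist x a < e.

Definition Pn {n : nat} : pt n -> Prop := fun x => 0 < x.2.
Definition Ln {n : nat} : pt n -> Prop := fun x => x.2 = 0.
Definition Xn {n : nat} : pt n -> Prop := fun x => Pn x \/ Ln x.

Definition lift_eps {n : nat} (a : pt n) (e : R) : pt n := (a.1, e).

Definition tBall {n : nat} (a : pt n) (e : R) : pt n -> Prop :=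
  fun x => x = a \/ Ball (lift_eps a e) e x.

Definition basic_nbhd {n : nat} (A : pt n -> Prop) (a : pt n) (U : pt n -> Prop) : Prop :=
  (Pn a /\ exists e, 0 < e < a.2 /\ (forall x, U x <-> Ball a e x))
  \/ (A a /\ exists e, 0 < e /\ (forall x, U x <-> (Ball a e x /\ Xn x)))
  \/ (Ln a /\ ~ A a /\ exists e, 0 < e /\ (forall x, U x <-> tBall a e x)).

Definition tau_open {n : nat} (A : pt n -> Prop) (U : pt n -> Prop) : Prop :=
  (forall x, U x -> Xn x) /\
  (forall x, U x -> exists V, basic_nbhd A x V /\ (forall y, V y -> U y)).

Definition tauL_open {n : nat} (A : pt n -> Prop) (V : pt n -> Prop) : Prop :=
  exists U, tau_open A U /\ (forall x, V x <-> (U x /\ Ln x)).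

Definition tauL_compact {n : nat} (A : pt n -> Prop) (K : pt n -> Prop) : Prop :=
  (forall x, K x -> Ln x) /\
  forall (I : Type) (F : I -> pt n -> Prop),
    (forall i, tauL_open A (F i)) ->
    (forall x, K x -> exists i, F i x) ->
    exists s : list I, forall x, K x -> exists i, List.In i s /\ F i x.

Definition tauL_sigma_compact {n : nat} (A : pt n -> Prop) : Prop :=
  exists K : nat -> pt n -> Prop,
    (forall k, tauL_compact A (K k)) /\
    (forall x, Ln x <-> exists k, K k x).

Definition euclL_closed {n : nat} (C : pt n -> Prop) : Prop :=
  (forall x, C x -> Ln x) /\
  (forall x, Ln x -> ~ C x ->
     exists e, 0 < e /\ forall y, Ln y -> Ball x e y -> ~ C y).

Definition euclL_Fsigma {n : nat} (A : pt n -> Prop) : Prop :=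
  exists C : nat -> pt n -> Prop,
    (forall k, euclL_closed (C k)) /\
    (forall x, A x <-> exists k, C k x).

Definition countable_set {T : Type} (S : T -> Prop) : Prop :=
  exists f : nat -> option T, forall x, S x -> exists k, f k = Some x.

(* On L_n the topology tau(A) is Euclidean at the points of A, while every
   point of L_n \ A is isolated.  Hence a compact K in L_n meets A in a
   Euclidean-closed set, and K \ A is countable: cover K by the isolated points
   and by balls of radius 1/(m+1) centred in K /\ A; a finite subcover must list
   every point of K \ A whose 1/(m+1)-ball misses K /\ A.  Conversely, if
   A = U_k C_k with C_k closed and L_n \ A is countable, then L_n is the union of
   the sets C_k /\ [-N, N]^(n-1), which are Euclidean-compact and thus
   tau(A)-compact because they lie in A, and of countably many singletons. *)

From HB Require Import structures.
From Stdlib Require Import Reals Lra List Classical FunctionalExtensionality.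
From mathcomp Require Import all_boot.
From mathcomp Require all_order all_algebra all_classical all_reals all_analysis.
From mathcomp Require Rstruct Rstruct_topology.

Lemma list_choice (T : eqType) (I : Type) (P : T -> Prop) (Q : T -> I -> Prop) (l : seq T) :
  (forall v, v \in l -> P v -> exists i, Q v i) ->
  exists s : list I, forall v, v \in l -> P v -> exists i, In i s /\ Q v i.
Proof.
elim: l => [|a l IH] l_Q; first by exists nil => v; rewrite in_nil.
have [s s_Q] := IH (fun v vl => l_Q v (@mem_behead _ (a :: l) v vl)).
case: (classic (P a)) => [/(l_Q a (mem_head _ _)) [i Qi]|nPa].
  exists (i :: s) => v; rewrite in_cons => /orP [/eqP -> _|vl Pv].
    by exists i; split=> //; left.
  by have [k [sk Qk]] := s_Q v vl Pv; exists k; split=> //; right.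
by exists s => v; rewrite in_cons => /orP [/eqP -> //|]; exact: s_Q.
Qed.

Module BoxHeineBorel.
Import all_order all_algebra all_classical all_reals all_analysis Rstruct Rstruct_topology.
Import Order.TTheory GRing.Theory Num.Theory.
Local Open Scope classical_set_scope.
Local Open Scope ring_scope.

(* [compact_cover] is only available in pointed spaces. *)
HB.instance Definition _ (m : nat) := isPointed.Build {ptws 'I_m -> R} (fun _ => 0).

Definition box {m : nat} (v : 'I_m -> R) (d : R) : set {ptws 'I_m -> R} :=
  [set u | forall j, `|u j - v j| < d].

Lemma open_box m (v : 'I_m -> R) d : open (box v d).
Proof.
rewrite openE => u ub.
have near_coord j : \forall w \near u, `|w j - v j| < d.
  have e0 : 0 < d - `|u j - v j| by rewrite subr_gt0.
  have : nbhs u [set w : {ptws 'I_m -> R} | ball (u j) (d - `|u j - v j|) (w j)].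
    exact: (@proj_continuous 'I_m (fun _ => R) j u _ (nbhsx_ballx _ _ e0)).
  apply: filterS => w; rewrite /ball /= => uw.
  apply: le_lt_trans (ler_distD (u j) (w j) (v j)) _; rewrite -ltrBrDr.
  by rewrite distrC.
exact: (@filter_forall _ _ _ (nbhs u) _ near_coord).
Qed.

Lemma finite_box_subcover {m : nat} (N : R) (S : ('I_m -> R) -> Prop) {I : Type}
    (G : I -> ('I_m -> R) -> Prop) :
  (forall v, S v -> forall j, Rabs (v j) <= N)%coqR ->
  (forall v, ~ S v -> exists d, 0 < d /\ forall u,
      (forall j, Rabs (u j - v j) < d) -> ~ S u)%coqR ->
  (forall v, S v -> exists i d, 0 < d /\ forall u,
      (forall j, Rabs (u j - v j) < d) -> G i u)%coqR ->
  exists s : list I, forall v, S v -> exists i, In i s /\ G i v.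
Proof.
move=> S_bdd S_closed S_loc.
have radius (v : {ptws 'I_m -> R}) : exists d, 0 < d /\
    (S v -> exists i, box v d `<=` G i) /\ (~ S v -> box v d `<=` ~` S).
  have boxE d u : box v d u -> forall j, (Rabs (u j - v j) < d)%coqR.
    by move=> uv j; rewrite RabsE; apply/RltP; exact: uv.
  case: (pselect (S v)) => Sv.
    have [i [d [/RltP d0 dG]]] := S_loc v Sv.
    by exists d; split=> //; split=> // _; exists i => u /boxE; exact: dG.
  have [d [/RltP d0 dS]] := S_closed v Sv.
  by exists d; split=> //; split=> // _ u /boxE; exact: dS.
pose d v := projT1 (cid (radius v)).
have dP v : 0 < d v /\ (S v -> exists i, box v (d v) `<=` G i) /\
    (~ S v -> box v (d v) `<=` ~` S) := projT2 (cid (radius v)).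
pose cube := [set f : {ptws 'I_m -> R} | forall j, [set` `[- N, N]] (f j)].
have cube_compact : compact cube.
  exact: (@tychonoff _ (fun _ => R) _ (fun _ => @segment_compact _ _ _)).
move: cube_compact; rewrite compact_cover => /(_ _ setT (fun v => box v (d v))).
case=> [v _|v _|D _ Dcov]; first exact: open_box.
  exists v => //; rewrite /box /= => j.
  by rewrite subrr normr0; case: (dP v).
have [s Hs] := @list_choice _ I S (fun v i => box v (d v) `<=` G i)
  (finmap.enum_fset D) (fun v _ Sv => (dP v).2.1 Sv).
exists s => v Sv.
have /Dcov [w wD wv] : cube v.
  move=> j; have /RleP := S_bdd v Sv j; rewrite RabsE => vN.
  by rewrite /= in_itv /= -ler_norml.
case: (pselect (S w)) => Sw; last by case: ((dP w).2.2 Sw v wv).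
by have [i [si Gi]] := Hs w wD Sw; exists i; split=> //; exact: Gi.
Qed.

End BoxHeineBorel.

Open Scope R_scope.

HB.instance Definition _ :=
  Monoid.isComLaw.Build R 0 Rplus (fun x y z => esym (Rplus_assoc x y z)) Rplus_comm Rplus_0_l.

Lemma big_Rplus_ge0 {I : Type} (r : seq I) (P : pred I) (F : I -> R) :
  (forall i, 0 <= F i) -> 0 <= \big[Rplus/0]_(i <- r | P i) F i.
Proof. by move=> F0; apply: big_ind => // *; [lra | exact: Rplus_le_le_0_compat]. Qed.

Lemma big_Rplus_le {I : Type} (r : seq I) (F G : I -> R) :
  (forall i, F i <= G i) -> \big[Rplus/0]_(i <- r) F i <= \big[Rplus/0]_(i <- r) G i.
Proof. by move=> FG; apply: big_ind2 => // *; [lra | exact: Rplus_le_compat]. Qed.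

Lemma big_Rplus_const_ord (k : nat) (c : R) : \big[Rplus/0]_(i < k) c = INR k * c.
Proof.
elim: k => [|k IH]; first by rewrite big_ord0 /=; lra.
by rewrite big_ord_recr IH S_INR /=; lra.
Qed.

Lemma le_big_Rplus_ord {k : nat} (F : 'I_k -> R) (j : 'I_k) :
  (forall i, 0 <= F i) -> F j <= \big[Rplus/0]_i F i.
Proof.
move=> F0; rewrite (bigD1 j) //=.
rewrite -{1}(Rplus_0_r (F j)); apply: Rplus_le_compat_l; exact: big_Rplus_ge0.
Qed.

(* Triangle inequality in R^2 for (a, sqrt Y) and (b, sqrt Z), combined with
   sqrt X <= sqrt Y + sqrt Z; the Cauchy-Schwarz step is (a B - A b)^2 >= 0. *)
Lemma sqrt_add_sqr_le (a b X Y Z : R) : 0 <= X -> 0 <= Y -> 0 <= Z ->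
  sqrt X <= sqrt Y + sqrt Z ->
  sqrt (Rsqr (a + b) + X) <= sqrt (Rsqr a + Y) + sqrt (Rsqr b + Z).
Proof.
move=> X0 Y0 Z0 XYZ.
have aY0 : 0 <= Rsqr a + Y by have := Rle_0_sqr a; lra.
have bZ0 : 0 <= Rsqr b + Z by have := Rle_0_sqr b; lra.
have XX : X <= (sqrt Y + sqrt Z) * (sqrt Y + sqrt Z).
  by rewrite -(sqrt_sqrt X X0); apply: Rmult_le_compat => //; exact: sqrt_pos.
have PP : sqrt (Rsqr a + Y) * sqrt (Rsqr a + Y) = Rsqr a + sqrt Y * sqrt Y.
  by rewrite !sqrt_sqrt.
have QQ : sqrt (Rsqr b + Z) * sqrt (Rsqr b + Z) = Rsqr b + sqrt Z * sqrt Z.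
  by rewrite !sqrt_sqrt.
have [A0 B0] : 0 <= sqrt Y /\ 0 <= sqrt Z by split; exact: sqrt_pos.
have [P0 Q0] : 0 <= sqrt (Rsqr a + Y) /\ 0 <= sqrt (Rsqr b + Z) by split; exact: sqrt_pos.
set A := sqrt Y in XX PP A0 *; set B := sqrt Z in XX QQ B0 *.
set P := sqrt (Rsqr a + Y) in PP P0 *; set Q := sqrt (Rsqr b + Z) in QQ Q0 *.
have CS : a * b + A * B <= P * Q.
  apply: Rsqr_incr_0_var; last exact: Rmult_le_pos.
  have := Rle_0_sqr (a * B - A * b); rewrite /Rsqr in PP QQ *; nra.
rewrite -(sqrt_Rsqr (P + Q)); last lra.
apply: sqrt_le_1_alt; rewrite /Rsqr in PP QQ *; nra.
Qed.

Section EuclideanDistance.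
Context {n : nat}.
Implicit Types x y z : pt n.

Lemma edist_ge0 x y : 0 <= edist x y.
Proof. exact: sqrt_pos. Qed.

Lemma edist_sym x y : edist x y = edist y x.
Proof.
rewrite /edist; congr (sqrt (_ + _)); last exact: Rsqr_neg_minus.
by apply: eq_bigr => i _; exact: Rsqr_neg_minus.
Qed.

Lemma edist_refl x : edist x x = 0.
Proof.
rewrite /edist (eq_bigr (fun _ => 0)); last by move=> i _; rewrite Rminus_diag Rsqr_0.
by rewrite big_Rplus_const_ord Rminus_diag Rsqr_0; rewrite Rmult_0_r !Rplus_0_r sqrt_0.
Qed.

Lemma edist_triangle x y z : edist x z <= edist x y + edist y z.
Proof.
rewrite /edist.
have [S1_0 [S2_0 [S3_0 S123]]] :
  let S (u v : pt n) := \big[Rplus/0]_(i < n.-1) Rsqr (u.1 i - v.1 i) in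
  0 <= S x z /\ 0 <= S x y /\ 0 <= S y z /\ sqrt (S x z) <= sqrt (S x y) + sqrt (S y z).
  apply: (big_rec3 (fun X Y Z => 0 <= X /\ 0 <= Y /\ 0 <= Z /\ sqrt X <= sqrt Y + sqrt Z)).
    by rewrite sqrt_0; lra.
  move=> i X Y Z _ [X0 [Y0 [Z0 XYZ]]].
  have -> : x.1 i - z.1 i = (x.1 i - y.1 i) + (y.1 i - z.1 i) by ring.
  do 3 (split; first by apply: Rplus_le_le_0_compat => //; exact: Rle_0_sqr).
  exact: sqrt_add_sqr_le.
have -> : x.2 - z.2 = (x.2 - y.2) + (y.2 - z.2) by ring.
rewrite ![_ + Rsqr _]Rplus_comm.
exact: sqrt_add_sqr_le.
Qed.

Lemma edist_coord x y j : Rabs (x.1 j - y.1 j) <= edist x y.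
Proof.
rewrite -sqrt_Rsqr_abs; apply: sqrt_le_1_alt.
apply: (Rle_trans _ (\big[Rplus/0]_(i < n.-1) Rsqr (x.1 i - y.1 i))).
  exact: (le_big_Rplus_ord (fun i => Rsqr (x.1 i - y.1 i)) j (fun i => Rle_0_sqr _)).
have := Rle_0_sqr (x.2 - y.2); lra.
Qed.

Lemma edist_last x y : Rabs (x.2 - y.2) <= edist x y.
Proof.
rewrite -sqrt_Rsqr_abs; apply: sqrt_le_1_alt.
have : 0 <= \big[Rplus/0]_(i < n.-1) Rsqr (x.1 i - y.1 i).
  by apply: big_Rplus_ge0 => i; exact: Rle_0_sqr.
lra.
Qed.

Lemma edist_eq0 x y : edist x y = 0 -> x = y.
Proof.
move=> xy0; have coord0 d : Rabs d <= 0 -> d = 0.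
  by move=> d0; have := Rle_abs d; have := Rle_abs (- d); rewrite Rabs_Ropp; lra.
case: x y xy0 (edist_coord x y) (edist_last x y) => [x1 x2] [y1 y2] /= -> x1y1 x2y2.
have /coord0 x2E := x2y2; congr pair; last lra.
by apply: functional_extensionality => j; have /coord0 := x1y1 j; lra.
Qed.

Lemma box_sub_ball e : 0 < e -> exists d, 0 < d /\ forall x y, x.2 = y.2 ->
  (forall j, Rabs (x.1 j - y.1 j) < d) -> edist x y < e.
Proof.
move=> e0; have k0 := pos_INR n.-1; set k := INR n.-1 in k0.
exists (e / (k + 1)); split; first by apply: Rdiv_lt_0_compat; lra.
set d := e / (k + 1); have d0 : 0 < d by apply: Rdiv_lt_0_compat; lra.
have ed : e = d * (k + 1) by rewrite /d; field; lra.
move=> x y xy2 xy1; rewrite /edist xy2 Rminus_diag Rsqr_0 Rplus_0_r.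
have sum_le : \big[Rplus/0]_(i < n.-1) Rsqr (x.1 i - y.1 i) <= k * Rsqr d.
  rewrite /k -big_Rplus_const_ord; apply: big_Rplus_le => i.
  by have /Rabs_def2 [] := xy1 i; rewrite /Rsqr; nra.
rewrite -(sqrt_Rsqr e); last lra.
apply: sqrt_lt_1_alt; split; first by apply: big_Rplus_ge0 => i; exact: Rle_0_sqr.
by apply: (Rle_lt_trans _ _ _ sum_le); rewrite ed /Rsqr; nra.
Qed.

End EuclideanDistance.

Lemma Ball_last_gt {n : nat} (a y : pt n) (r : R) : Ball a r y -> a.2 - r < y.2.
Proof.
rewrite /Ball => ya; have := Rle_lt_trans _ _ _ (edist_last y a) ya.
by case/Rabs_def2; lra.
Qed.

Lemma list_pos_lower_bound {T : Type} (s : list T) (d : T -> R) :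
  exists e, 0 < e /\ forall y, In y s -> 0 < d y -> e <= d y.
Proof.
elim: s => [|a s [e [e0 le_e]]]; first by exists 1; split=> //; lra.
case: (Rlt_le_dec 0 (d a)) => da.
  exists (Rmin e (d a)); split; first exact: Rmin_pos.
  move=> y [<-|sy] dy; first exact: Rmin_r.
  exact: Rle_trans (Rmin_l _ _) (le_e y sy dy).
by exists e; split=> // y [<-|sy] dy; [lra | exact: le_e].
Qed.

Section SubspaceTopology.
Context {n : nat} (A : pt n -> Prop).
Implicit Types x y z : pt n.

Lemma tauL_openP (V : pt n -> Prop) : tauL_open A V <->
  (forall x, V x -> Ln x) /\
  (forall z, V z -> A z -> exists e, 0 < e /\ forall y, Ln y -> Ball z e y -> V y).
Proof.
split.
  move=> [U [[_ U_loc] VE]]; split=> [x /VE [] //|z Vz Az].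
  have [Uz Lz] := (VE z).1 Vz.
  have [W [[[Pz _]|[[_ [e [e0 We]]]|[_ [nAz _]]]] WU]] := U_loc z Uz; last by [].
    by rewrite /Pn /Ln in Pz Lz; lra.
  exists e; split=> // y Ly zy; apply/VE; split=> //.
  by apply/WU/We; split=> //; right.
move=> [VL V_loc]; exists (fun x => V x \/ Pn x); split; last first.
  move=> x; split=> [Vx|[[//|Px] Lx]]; first by split; [left | exact: VL].
  by rewrite /Pn /Ln in Px Lx; lra.
split=> [x [/VL Lx|Px]|x [Vx|Px]]; [by right | by left | |].
  case: (classic (A x)) => Ax.
    have [e [e0 eV]] := V_loc x Vx Ax.
    exists (fun y => Ball x e y /\ Xn y); split; first by right; left; split=> //; exists e.
    by move=> y [xy [Py|Ly]]; [right | left; exact: eV].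
  exists (tBall x 1); split.
    by right; right; split; [exact: VL | split=> //; exists 1; split=> //; lra].
  move=> y [->|/Ball_last_gt]; [by left | rewrite /= => y0; right; rewrite /Pn; lra].
exists (Ball x (x.2 / 2)); split.
  by left; split=> //; exists (x.2 / 2); rewrite /Pn in Px; split=> //; lra.
by move=> y /Ball_last_gt xy; right; rewrite /Pn in Px *; lra.
Qed.

Definition cell (y : pt n) (r : R) (z : pt n) : Prop :=
  (z = y /\ Ln y /\ ~ A y) \/ (A y /\ Ln z /\ Ball y r z).

Lemma compact_cell_cover {K : pt n -> Prop} {r : pt n -> R} :
  tauL_compact A K -> (forall y, K y -> A y -> 0 < r y) ->
  exists s : list (pt n), forall z, K z -> exists y, In y s /\ K y /\ cell y (r y) z.
Proof.
move=> [KL K_cpt] r0.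
have [|z Kz|s s_cov] := K_cpt (pt n) (fun y z => K y /\ cell y (r y) z).
- move=> y; apply/tauL_openP; split=> [z [_ [[-> []]|[_ []]]] //|].
  move=> z [Ky [[-> [_ nAy]]|[Ay [_ zy]]]] Az; first by case: nAy.
  exists (r y - edist z y); split=> [|w Lw wz]; first by rewrite /Ball in zy; lra.
  split=> //; right; do 2 split=> //; rewrite /Ball in wz zy *.
  by have := edist_triangle w z y; lra.
- exists z; split=> //; have Lz := KL z Kz.
  case: (classic (A z)) => Az; first by right; rewrite /Ball edist_refl; auto.
  by left.
by exists s => z /s_cov [y [sy [Ky zy]]]; exists y.
Qed.

Lemma compact_inter_closed {K : pt n -> Prop} :
  tauL_compact A K -> euclL_closed (fun x => K x /\ A x).
Proof.
move=> K_cpt; split=> [x [Kx _]|x Lx nKAx]; first exact: K_cpt.1.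
have r0 y : K y -> A y -> 0 < edist y x / 2.
  move=> Ky Ay; suff : edist y x <> 0 by have := edist_ge0 y x; lra.
  by move/edist_eq0 => yx; apply: nKAx; rewrite -yx.
have [s s_cov] := compact_cell_cover K_cpt r0.
have [e [e0 le_e]] := list_pos_lower_bound s (fun y => edist y x / 2).
exists e; split=> // w Lw xw [Kw Aw].
have [y [sy [Ky [[wy [_ nAy]]|[Ay [_ yw]]]]]] := s_cov w Kw; first by rewrite -wy in nAy.
have := le_e y sy (r0 y Ky Ay); have := edist_triangle y w x.
by rewrite /Ball in xw yw; rewrite (edist_sym y w); lra.
Qed.

End SubspaceTopology.
Arguments compact_cell_cover {n A K r}.
Arguments compact_inter_closed {n A K}.

Section Countable.
Context {T : Type}.

Lemma countable_set_sub {S1 S2 : T -> Prop} :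
  (forall x, S1 x -> S2 x) -> countable_set S2 -> countable_set S1.
Proof. by move=> S12 [f f_onto]; exists f => x /S12 /f_onto. Qed.

Lemma countable_set_In (s : list T) : countable_set (fun x => In x s).
Proof. by exists (nth_error s) => x; exact: In_nth_error. Qed.

Lemma countable_set_bigcup (S : nat -> T -> Prop) :
  (forall k, countable_set (S k)) -> countable_set (fun x => exists k, S k x).
Proof.
move=> /boolp.choice [f f_onto].
exists (fun N => if unpickle N is Some (k, i) then f k i else None).
by move=> x [k /f_onto [i fi]]; exists (pickle (k, i)); rewrite pickleK.
Qed.

End Countable.

Section SigmaCompactToFsigma.
Context {n : nat} (A : pt n -> Prop).

Lemma compact_diff_countable (K : pt n -> Prop) :
  tauL_compact A K -> countable_set (fun x => K x /\ ~ A x).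
Proof.
move=> K_cpt; have [_ KA_closed] := compact_inter_closed K_cpt.
pose far m x := K x /\ ~ A x /\
  forall y, Ln y -> Ball x (/ INR m.+1) y -> ~ (K y /\ A y).
apply: (countable_set_sub (S2 := fun x => exists m, far m x)).
  move=> x [Kx nAx]; have [e [e0 e_far]] := KA_closed x (K_cpt.1 x Kx) (fun KAx => nAx KAx.2).
  have [N [Ne N0]] := archimed_cor1 e e0.
  exists N.-1; split=> //; split=> // y Ly xy; apply: e_far Ly _.
  by move: xy; rewrite /Ball prednK; [move=> ?; lra | apply/ltP].
apply: countable_set_bigcup => m.
(* A point of [far m] can only be covered by its own cell. *)
have [s s_cov] := compact_cell_cover (r := fun _ => / INR m.+1) K_cpt
  (fun _ _ _ => Rinv_0_lt_compat _ (lt_0_INR _ (Nat.lt_0_succ m))).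
apply: (countable_set_sub _ (countable_set_In s)) => x [Kx [nAx x_far]].
have [y [sy [Ky [[-> _] // | [Ay [_ yx]]]]]] := s_cov x Kx.
by case: (x_far y (K_cpt.1 y Ky)); [rewrite /Ball edist_sym | split].
Qed.

Lemma sigma_compact_Fsigma_countable : (forall x, A x -> Ln x) ->
  tauL_sigma_compact A -> euclL_Fsigma A /\ countable_set (fun x => Ln x /\ ~ A x).
Proof.
move=> AL [K [K_cpt K_cov]]; split.
  exists (fun k x => K k x /\ A x); split=> [k|x]; first exact: compact_inter_closed.
  split=> [Ax|[k []] //]; have [k Kx] := (K_cov x).1 (AL x Ax); by exists k.
apply: (countable_set_sub (S2 := fun x => exists k, K k x /\ ~ A x)).
  by move=> x [/K_cov [k Kx] nAx]; exists k.
by apply: countable_set_bigcup => k; exact: compact_diff_countable.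
Qed.

End SigmaCompactToFsigma.

Section FsigmaToSigmaCompact.
Context {n : nat} (A : pt n -> Prop).

Lemma compact_subsingleton (S : pt n -> Prop) : (forall x, S x -> Ln x) ->
  (forall x y, S x -> S y -> x = y) -> tauL_compact A S.
Proof.
move=> SL S_uniq; split=> // I F _ F_cov.
case: (classic (exists x, S x)) => [[x Sx]|S0]; last first.
  by exists nil => y Sy; case: S0; exists y.
have [i Fi] := F_cov x Sx.
by exists [:: i] => y Sy; exists i; split; [left | rewrite (S_uniq y x Sy Sx)].
Qed.

Lemma compact_closed_bounded (C : pt n -> Prop) (N : R) :
  euclL_closed C -> (forall x, C x -> A x) ->
  tauL_compact A (fun x => C x /\ forall j, Rabs (x.1 j) <= N).
Proof.
move=> [CL C_closed] CA; split=> [x [/CL //]|I F F_open F_cov].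
have [|v nSv|v [Cv vN]|s s_cov] := BoxHeineBorel.finite_box_subcover N
  (fun v : 'I_n.-1 -> R => C (v, 0) /\ forall j, Rabs (v j) <= N)
  (fun i (v : 'I_n.-1 -> R) => F i (v, 0)).
- by move=> v [].
- case: (classic (C (v, 0))) => Cv.
    have [j vj] : exists j, ~ Rabs (v j) <= N.
      by apply: not_all_ex_not => vN; apply: nSv.
    exists (Rabs (v j) - N); split=> [|u uv [_ uN]]; first lra.
    have := Rabs_triang_inv (v j) (u j); rewrite Rabs_minus_sym.
    by have := uv j; have := uN j; lra.
  have [e [e0 e_out]] := C_closed (v, 0) (erefl _) Cv.
  have [d [d0 d_in]] := box_sub_ball (n := n) e e0.
  by exists d; split=> // u uv [Cu _]; apply: e_out Cu; last exact: d_in.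
- have [i Fi] := F_cov (v, 0) (conj Cv vN).
  have [_ /(_ _ Fi (CA _ Cv)) [e [e0 e_in]]] := (tauL_openP A (F i)).1 (F_open i).
  have [d [d0 d_in]] := box_sub_ball (n := n) e e0.
  by exists i, d; split=> // u uv; apply: e_in; last exact: d_in.
exists s => -[u z] [Cx xN]; have z0 : z = 0 := CL _ Cx; subst z.
exact: s_cov.
Qed.

Lemma Fsigma_countable_sigma_compact :
  euclL_Fsigma A -> countable_set (fun x => Ln x /\ ~ A x) -> tauL_sigma_compact A.
Proof.
move=> [C [C_closed AC]] [f f_onto].
exists (fun j x => match (unpickle j : option ((nat * nat) + nat)) with
  | Some (inl (k, N)) => C k x /\ forall t, Rabs (x.1 t) <= INR N
  | Some (inr i) => f i = Some x /\ Ln x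
  | None => False end); split.
  move=> j; case: (unpickle j) => [[[k N]|i]|].
  - by apply: compact_closed_bounded => // x Cx; apply/AC; exists k.
  - by apply: compact_subsingleton => [x []|x y [-> _] [[]]].
  - exact: compact_subsingleton.
move=> x; split; last first.
  by case=> j; case: (unpickle j) => [[[k N] [/(C_closed k).1]|i []]|].
move=> Lx; case: (classic (A x)) => Ax; last first.
  have [i fi] := f_onto x (conj Lx Ax).
  by exists (pickle (inr i : (nat * nat) + nat)); rewrite pickleK.
have [k Cx] := (AC x).1 Ax.
have [N xN] := INR_archimed 1 (edist x (fun _ => 0, 0)) Rlt_0_1.
exists (pickle (inl (k, N) : (nat * nat) + nat)); rewrite pickleK; split=> // t.
by have := edist_coord x (fun _ => 0, 0) t; rewrite /= Rminus_0_r; lra.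
Qed.

End FsigmaToSigmaCompact.

Theorem mainTheorem12 (n : nat) (hn : (2 <= n)%N) (A : pt n -> Prop)
  (hA : forall x, A x -> Ln x) :
  tauL_sigma_compact A <->
  (euclL_Fsigma A /\ countable_set (fun x : pt n => Ln x /\ ~ A x)).
Proof.
split; first exact: sigma_compact_Fsigma_countable.
by case; exact: Fsigma_countable_sigma_compact.
Qed.
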